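(* Let $n=5$, $x_i=i$ for $i=1,\dots,5$, and $Y_i=\beta_0+\beta_1x_i+\varepsilon_i$ with unknown $\beta_0,\beta_1\in\mathbb{R}$ and $\varepsilon_1,\dots,\varepsilon_5$ i.i.d. with a continuous distribution. Let $s_1<s_2<\cdots<s_{10}$ be the ten slopes $S_{ij}=(Y_i-Y_j)/(x_i-x_j)$, $i<j$, sorted increasingly. Then $$p_4:=P\bigl(\beta_1\in(s_1,s_{10})\wedge s_1+s_9<2s_2\wedge 2s_9<s_2+s_{10}\bigr)=0.$$
   Context: Ties among the slopes occur with probability zero and are ignored. *)

From HB Require Import structures.
From mathcomp Require Import all_boot all_order all_algebra.
From mathcomp Require Import all_classical all_reals all_analysis.
Set Implicit Arguments. Unset Strict Implicit. Unset Printing Implicit Defensive.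
Import Order.TTheory GRing.Theory Num.Theory.
Local Open Scope classical_set_scope.
Local Open Scope ring_scope.

(* Mutual independence of a finite family of real random variables:
   product rule for the joint preimage of measurable sets (taking B i = setT
   recovers every subfamily). *)
Definition mutually_independent {d} {T : measurableType d} {R : realType}
  (P : probability T R) (n : nat) (X : 'I_n -> {RV P >-> R}) : Prop :=
  forall B : 'I_n -> set R, (forall i, measurable (B i)) ->
    P (\bigcap_(i in [set: 'I_n]) (X i @^-1` B i)) =
    (\prod_(i < n) P (X i @^-1` B i))%E.

Definition identically_distributed {d} {T : measurableType d} {R : realType}
  (P : probability T R) (n : nat) (X : 'I_n.+1 -> {RV P >-> R}) : Prop :=
  forall i (B : set R), measurable B -> P (X i @^-1` B) = P (X ord0 @^-1` B).

(* continuous distribution (continuous cdf, i.e. no atoms) *)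
Definition continuous_law {d} {T : measurableType d} {R : realType}
  (P : probability T R) (Z : {RV P >-> R}) : Prop :=
  forall x : R, P (Z @^-1` [set x]) = 0%E.

(* design points x_i = i, i = 1..5 (ordinal i : 'I_5 stands for index i+1) *)
Definition xpt {R : realType} (i : 'I_5) : R := (i.+1)%:R.

Definition slopes {R : realType} (Y : 'I_5 -> R) : seq R :=
  flatten [seq [seq (Y i - Y j) / (xpt i - xpt j) | j : 'I_5 <- enum 'I_5 & (i < j)%N]
          | i : 'I_5 <- enum 'I_5].

Definition sorted_slope {R : realType} (Y : 'I_5 -> R) (k : nat) : R :=
  nth 0 (sort <=%R (slopes Y)) k.-1.

Arguments mutually_independent {d T R} P {n} X.
Arguments identically_distributed {d T R} P {n} X.
Arguments continuous_law {d T R} P Z.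

(* With x_i = i the slope S_ij is the mean of the consecutive increments
   d_k = Y_(k+1) - Y_k for i <= k < j, so every slope lies between a minimal
   increment d_p = s_1 and a maximal one d_q = s_10.  If p has a neighbour r
   other than q, then d_p and (d_p + d_r)/2 give s_2 <= (d_p + d_r)/2 while
   d_r and d_q give d_r <= s_9, hence 2 s_2 <= s_1 + s_9.  Otherwise p is an
   end point whose only neighbour is q, so q has a neighbour r other than p
   and the mirror argument gives s_2 + s_10 <= 2 s_9.  Hence the event is
   empty for every outcome, whatever the law of the errors. *)

From HB Require Import structures.
From mathcomp Require Import all_boot all_order all_algebra.
From mathcomp Require Import all_classical all_reals all_analysis.
From mathcomp Require Import ring lra zify.
Import Order.TTheory GRing.Theory Num.Theory.
Local Open Scope classical_set_scope.
Local Open Scope ring_scope.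

Lemma sorted_nth_le_count (T : eqType) (x0 : T) (leT : rel T) (t : seq T) m k :
  transitive leT -> sorted leT t -> (k < count (leT^~ m) t)%N ->
  leT (nth x0 t k) m.
Proof.
move=> leT_tr t_sorted k_lt; have k_size := leq_trans k_lt (count_size _ t).
apply: contraLR k_lt => not_le_tk; rewrite -leqNgt.
rewrite -(cat_take_drop k t) count_cat (drop_nth x0 k_size) /= (negbTE not_le_tk).
have /(order_path_min leT_tr) tail_ge : path leT (nth x0 t k) (drop k.+1 t).
  by have := drop_sorted k t_sorted; rewrite (drop_nth x0 k_size).
rewrite [count _ (drop _ _)](eq_in_count (a2 := pred0)) ?count_pred0; last first.
  move=> x x_in /=; have le_tk_x := allP tail_ge x x_in.
  by apply: contraNF not_le_tk; apply: leT_tr.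
by rewrite add0n addn0 (leq_trans (count_size _ _)) // size_take_min geq_minl.
Qed.

Lemma count_gt1_nth (T : eqType) (x0 : T) (a : pred T) (s : seq T) i j :
  (i < j < size s)%N -> a (nth x0 s i) -> a (nth x0 s j) -> (1 < count a s)%N.
Proof.
move=> /andP[lt_ij lt_js] a_i a_j.
rewrite -(cat_take_drop j s) count_cat (drop_nth x0 lt_js) /= a_j.
suff : (0 < count a (take j s))%N by lia.
rewrite -has_count; apply/hasP; exists (nth x0 s i) => //.
by rewrite -(nth_take x0 lt_ij) mem_nth // size_takel // ltnW.
Qed.

Section SortOrderStatistics.
Local Open Scope order_scope.
Context {disp : Order.disp_t} {T : orderType disp} (x0 : T) {s : seq T}.
Local Notation t := (sort <=%O s).

Let sort_perm : perm_eq t s. Proof. by rewrite perm_sort. Qed.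

Lemma nth_sort_le_count k m : (k < count (<= m) s)%N -> nth x0 t k <= m.
Proof.
rewrite -(permP sort_perm); apply: sorted_nth_le_count.
  exact: le_trans.
exact/sort_sorted/le_total.
Qed.

Lemma nth_sort_ge_count k m :
  (k < count (>= m) s)%N -> m <= nth x0 t (size s - k.+1).
Proof.
move=> k_lt; have k_size := leq_trans k_lt (count_size _ s).
rewrite -(size_sort <=%O) -nth_rev ?size_sort //.
apply: (@sorted_nth_le_count _ _ (fun x y => y <= x)).
- by move=> y x z le_yx le_zy; apply: le_trans le_zy le_yx.
- by rewrite rev_sorted; apply/sort_sorted/le_total.
- by rewrite count_rev (permP sort_perm).
Qed.

Lemma nth_sort_lb k m : (k < size s)%N -> all (>= m) s -> m <= nth x0 t k.
Proof.
move=> k_size /allP; apply; rewrite -(perm_mem sort_perm).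
by rewrite mem_nth // size_sort.
Qed.

Lemma nth_sort_ub k m : (k < size s)%N -> all (<= m) s -> nth x0 t k <= m.
Proof.
move=> k_size /allP; apply; rewrite -(perm_mem sort_perm).
by rewrite mem_nth // size_sort.
Qed.

End SortOrderStatistics.

Section SortGaps.
Context {R : realFieldType} {s : seq R}.
Implicit Types (a b m : R).
Local Notation t := (sort <=%R s).

Let size_gt0 p : (1 < count p s)%N -> (0 < size s)%N.
Proof. by move=> two_p; rewrite (leq_trans _ (count_size p s)) 1?ltnW. Qed.

Lemma sort_gap_low a b m : all (>= a) s -> 2 * m <= a + b ->
  (1 < count (<= m) s)%N -> (1 < count (>= b) s)%N ->
  2 * t`_1 <= t`_0 + t`_(size s - 2).
Proof.
move=> lb_a le_2m two_le two_ge.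
have : a <= t`_0 := nth_sort_lb _ _ _ (size_gt0 _ two_le) lb_a.
have : t`_1 <= m := nth_sort_le_count _ _ _ two_le.
have : b <= t`_(size s - 2) := nth_sort_ge_count _ _ _ two_ge.
lra.
Qed.

Lemma sort_gap_high a b m : all (<= a) s -> a + b <= 2 * m ->
  (1 < count (>= m) s)%N -> (1 < count (<= b) s)%N ->
  t`_1 + t`_(size s).-1 <= 2 * t`_(size s - 2).
Proof.
move=> ub_a le_2m two_ge two_le.
have last_lt : ((size s).-1 < size s)%N by rewrite ltn_predL (size_gt0 _ two_le).
have : t`_(size s).-1 <= a := nth_sort_ub _ _ _ last_lt ub_a.
have : t`_1 <= b := nth_sort_le_count _ _ _ two_le.
have : m <= t`_(size s - 2) := nth_sort_ge_count _ _ _ two_ge.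
lra.
Qed.

End SortGaps.

Section RunAverages.
Context {R : realFieldType}.

Definition run_averages (d0 d1 d2 d3 : R) : seq R :=
  [:: d0; (d0 + d1) / 2; (d0 + d1 + d2) / 3; (d0 + d1 + d2 + d3) / 4;
      d1; (d1 + d2) / 2; (d1 + d2 + d3) / 3; d2; (d2 + d3) / 2; d3].

Lemma min4_cases (a0 a1 a2 a3 : R) :
  [\/ [/\ a0 <= a1, a0 <= a2 & a0 <= a3], [/\ a1 <= a0, a1 <= a2 & a1 <= a3],
      [/\ a2 <= a0, a2 <= a1 & a2 <= a3] | [/\ a3 <= a0, a3 <= a1 & a3 <= a2]].
Proof.
case: (leP a0 a1) => h01.
  case: (leP a0 a2) => h02.
    by case: (leP a0 a3) => h03; [apply: Or41 | apply: Or44]; split; lra.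
  by case: (leP a2 a3) => h23; [apply: Or43 | apply: Or44]; split; lra.
case: (leP a1 a2) => h12.
  by case: (leP a1 a3) => h13; [apply: Or42 | apply: Or44]; split; lra.
by case: (leP a2 a3) => h23; [apply: Or43 | apply: Or44]; split; lra.
Qed.

Lemma max4_cases (a0 a1 a2 a3 : R) :
  [\/ [/\ a1 <= a0, a2 <= a0 & a3 <= a0], [/\ a0 <= a1, a2 <= a1 & a3 <= a1],
      [/\ a0 <= a2, a1 <= a2 & a3 <= a2] | [/\ a0 <= a3, a1 <= a3 & a2 <= a3]].
Proof.
by case: (min4_cases (- a0) (- a1) (- a2) (- a3)); rewrite !lerN2 => -[? ? ?];
  [apply: Or41 | apply: Or42 | apply: Or43 | apply: Or44].
Qed.

Ltac all_bounded := rewrite /= ?andbT; repeat (apply/andP; split); lra.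
Ltac two_at_positions i j := apply: (@count_gt1_nth _ (0 : R) _ _ i j) => //=; lra.

Lemma run_averages_gap (d0 d1 d2 d3 : R) :
  let s := run_averages d0 d1 d2 d3 in let t := sort <=%R s in
  2 * t`_1 <= t`_0 + t`_(size s - 2) \/ t`_1 + t`_(size s).-1 <= 2 * t`_(size s - 2).
Proof.
move=> s t; rewrite {}/t.
(* In [s] the increments d0, d1, d2, d3 sit at positions 0, 4, 7, 9 and the
   means of neighbouring increments at positions 1, 5, 8. *)
have [[m1 m2 m3]|[m1 m2 m3]|[m1 m2 m3]|[m1 m2 m3]] := min4_cases d0 d1 d2 d3;
have [[M1 M2 M3]|[M1 M2 M3]|[M1 M2 M3]|[M1 M2 M3]] := max4_cases d0 d1 d2 d3.
- left; apply: (sort_gap_low d0 d1 ((d0 + d1) / 2));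
    [all_bounded | lra | two_at_positions 0%N 1%N | two_at_positions 0%N 4%N].
- right; apply: (sort_gap_high d1 d2 ((d1 + d2) / 2));
    [all_bounded | lra | two_at_positions 4%N 5%N | two_at_positions 0%N 7%N].
- left; apply: (sort_gap_low d0 d1 ((d0 + d1) / 2));
    [all_bounded | lra | two_at_positions 0%N 1%N | two_at_positions 4%N 7%N].
- left; apply: (sort_gap_low d0 d1 ((d0 + d1) / 2));
    [all_bounded | lra | two_at_positions 0%N 1%N | two_at_positions 4%N 9%N].
- left; apply: (sort_gap_low d1 d2 ((d1 + d2) / 2));
    [all_bounded | lra | two_at_positions 4%N 5%N | two_at_positions 0%N 7%N].
- left; apply: (sort_gap_low d1 d0 ((d0 + d1) / 2));
    [all_bounded | lra | two_at_positions 1%N 4%N | two_at_positions 0%N 4%N].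
- left; apply: (sort_gap_low d1 d0 ((d0 + d1) / 2));
    [all_bounded | lra | two_at_positions 1%N 4%N | two_at_positions 0%N 7%N].
- left; apply: (sort_gap_low d1 d0 ((d0 + d1) / 2));
    [all_bounded | lra | two_at_positions 1%N 4%N | two_at_positions 0%N 9%N].
- left; apply: (sort_gap_low d2 d1 ((d1 + d2) / 2));
    [all_bounded | lra | two_at_positions 5%N 7%N | two_at_positions 0%N 4%N].
- left; apply: (sort_gap_low d2 d3 ((d2 + d3) / 2));
    [all_bounded | lra | two_at_positions 7%N 8%N | two_at_positions 4%N 9%N].
- left; apply: (sort_gap_low d2 d1 ((d1 + d2) / 2));
    [all_bounded | lra | two_at_positions 5%N 7%N | two_at_positions 4%N 7%N].
- left; apply: (sort_gap_low d2 d1 ((d1 + d2) / 2));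
    [all_bounded | lra | two_at_positions 5%N 7%N | two_at_positions 4%N 9%N].
- left; apply: (sort_gap_low d3 d2 ((d2 + d3) / 2));
    [all_bounded | lra | two_at_positions 8%N 9%N | two_at_positions 0%N 7%N].
- left; apply: (sort_gap_low d3 d2 ((d2 + d3) / 2));
    [all_bounded | lra | two_at_positions 8%N 9%N | two_at_positions 4%N 7%N].
- right; apply: (sort_gap_high d2 d1 ((d1 + d2) / 2));
    [all_bounded | lra | two_at_positions 5%N 7%N | two_at_positions 4%N 9%N].
- left; apply: (sort_gap_low d3 d2 ((d2 + d3) / 2));
    [all_bounded | lra | two_at_positions 8%N 9%N | two_at_positions 7%N 9%N].
Qed.

End RunAverages.

Lemma enum_ord5 : enum 'I_5 = [:: inord 0; inord 1; inord 2; inord 3; inord 4].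
Proof. by apply: (inj_map val_inj); rewrite val_enum_ord /= !inordK. Qed.

Lemma slopes_run_averages (R : realType) (y : 'I_5 -> R) :
  slopes y = run_averages (y (inord 1) - y (inord 0)) (y (inord 2) - y (inord 1))
                          (y (inord 3) - y (inord 2)) (y (inord 4) - y (inord 3)).
Proof.
have xptE k : (k < 5)%N -> xpt (inord k : 'I_5) = k.+1%:R :> R.
  by move=> lt_k5; rewrite /xpt inordK.
rewrite /slopes enum_ord5 /= !inordK //= !xptE //= /run_averages.
by congr [:: _; _; _; _; _; _; _; _; _; _]; field.
Qed.

Lemma sorted_slope_gap {R : realType} (y : 'I_5 -> R) :
  2 * sorted_slope y 2%N <= sorted_slope y 1%N + sorted_slope y 9%N \/
  sorted_slope y 2%N + sorted_slope y 10%N <= 2 * sorted_slope y 9%N.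
Proof. by rewrite /sorted_slope slopes_run_averages; apply: run_averages_gap. Qed.

Theorem theorem6 (R : realType) (d : measure_display) (T : measurableType d)
  (P : probability T R) (eps : 'I_5 -> {RV P >-> R}) (beta0 beta1 : R) :
  mutually_independent P eps ->
  identically_distributed P eps ->
  continuous_law P (eps ord0) ->
  let Y := fun (w : T) (i : 'I_5) => beta0 + beta1 * xpt i + eps i w in
  let s := fun (w : T) (k : nat) => sorted_slope (Y w) k in
  P [set w | [/\ s w 1%N < beta1 < s w 10%N,
                 s w 1%N + s w 9%N < 2 * s w 2%N &
                 2 * s w 9%N < s w 2%N + s w 10%N]] = 0%E.
Proof.
move=> _ _ _ Y s.
rewrite [X in P X](_ : _ = set0) ?measure0 //.
apply/seteqP; split=> // w /= [_].
by move: (sorted_slope_gap (Y w)); rewrite /s /=; lra.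
Qed.
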